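(* Let $j_1,j_2$ be real numbers and $p\in\{0,1\}$. Let $\Psi_1$ be the generating highest-weight vector, of parity $p$, of a chiral $\mathfrak{sl}(2|1)$-module $[j_1,\mp j_1]$ and $\Psi_2$ the generating vector of the chiral module $[j_2,\pm j_2]$ of opposite chirality (upper signs: $\Psi_1$ left-chiral, $\Psi_2$ right-chiral; lower signs: the reverse). Let $\mathbf U_+=\mathbf V_++\mathbf W_+$. Then for every $n\ge0$, $$n!\sum_{k_1+k_2=2n}\frac{(-1)^{\lfloor (k_1+1-p)/2\rfloor}}{\Gamma\!\left(1+\lfloor\frac{k_1}{2}\rfloor\right)\Gamma\!\left(1+\lfloor\frac{k_2}{2}\rfloor\right)\Gamma\!\left(2j_1+\lfloor\frac{k_1+1}{2}\rfloor\right)\Gamma\!\left(2j_2+\lfloor\frac{k_2+1}{2}\rfloor\right)}\ \mathbf U_+^{k_1}\Psi_1\otimes\mathbf U_+^{k_2}\Psi_2$$ equals $$\sum_{n_1+n_2=n}\binom{n}{n_1}\frac{(-1)^{n_1}}{\Gamma(2j_1+n_1)\Gamma(2j_2+n_2)}\mathbf L_+^{n_1}\Psi_1\otimes\mathbf L_+^{n_2}\Psi_2-(-1)^p\,n\sum_{m_1+m_2=n-1}\binom{n-1}{m_1}\frac{(-1)^{m_1}}{\Gamma(2j_1+1+m_1)\Gamma(2j_2+1+m_2)}\mathbf L_+^{m_1}\mathbf X\Psi_1\otimes\mathbf L_+^{m_2}\mathbf Y\Psi_2,$$ where $(\mathbf X,\mathbf Y)=(\mathbf V_+,\mathbf W_+)$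 for the upper signs and $(\mathbf X,\mathbf Y)=(\mathbf W_+,\mathbf V_+)$ for the lower signs, and the second sum is empty for $n=0$. This vector is a highest-weight vector of $[j_1,\mp j_1]\otimes[j_2,\pm j_2]$ with $\mathbf L$-eigenvalue $j_1+j_2+n$ and $\mathbf B$-eigenvalue $\mp(j_1-j_2)$.
   Context: $\mathfrak{sl}(2|1)$ denotes the complex Lie superalgebra with even basis $\mathbf L_+,\mathbf L_-,\mathbf L,\mathbf B$ and odd basis $\mathbf V_+,\mathbf V_-,\mathbf W_+,\mathbf W_-$, with relations: $[\mathbf L_+,\mathbf L_-]=2\mathbf L$, $[\mathbf L,\mathbf L_\pm]=\pm\mathbf L_\pm$, $\mathbf B$ commutes with $\mathbf L_\pm,\mathbf L$; for $\mathbf X\in\{\mathbf V,\mathbf W\}$: $[\mathbf L,\mathbf X_\pm]=\pm\tfrac12\mathbf X_\pm$, $[\mathbf L_+,\mathbf X_-]=\mathbf X_+$, $[\mathbf L_-,\mathbf X_+]=\mathbf X_-$, $[\mathbf L_+,\mathbf X_+]=[\mathbf L_-,\mathbf X_-]=0$; $[\mathbf B,\mathbf V_\pm]=\tfrac12\mathbf V_\pm$, $[\mathbf B,\mathbf W_\pm]=-\tfrac12\mathbf W_\pm$; $\{\mathbf V_a,\mathbf V_b\}=\{\mathbf W_a,\mathbf W_b\}=0$, $\{\mathbf V_+,\mathbf W_+\}=\mathbf L_+$, $\{\mathbf V_+,\mathbf W_-\}=-\mathbf L+\mathbf B$, $\{\mathbf V_-,\mathbf W_+\}=-\mathbf L-\mathbf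 B$, $\{\mathbf V_-,\mathbf W_-\}=-\mathbf L_-$. The left-chiral module $[J,-J]$ is the $\mathbb Z_2$-graded module generated by a homogeneous vector $\Omega$ with $\mathbf L_-\Omega=\mathbf V_-\Omega=\mathbf W_-\Omega=\mathbf W_+\Omega=0$, $\mathbf L\Omega=J\Omega$, $\mathbf B\Omega=-J\Omega$ (basis $\mathbf L_+^n\Omega,\mathbf L_+^n\mathbf V_+\Omega$); the right-chiral module $[J,J]$ is generated by $\Omega$ with $\mathbf L_-\Omega=\mathbf V_-\Omega=\mathbf W_-\Omega=\mathbf V_+\Omega=0$, $\mathbf L\Omega=J\Omega$, $\mathbf B\Omega=J\Omega$ (basis $\mathbf L_+^n\Omega,\mathbf L_+^n\mathbf W_+\Omega$). A highest-weight vector is one annihilated by $\mathbf L_-,\mathbf V_-,\mathbf W_-$. Tensor products carry the action $G(x\otimes y)=Gx\otimes y+(-1)^{|G||x|}x\otimes Gy$ for homogeneous $G,x$. Here $1/\Gamma$ is understood as the (entire) reciprocal Gamma function, and $\lfloor\cdot\rfloor$ is the floor function. *)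

From HB Require Import structures.
From mathcomp Require Import all_boot all_order all_algebra.
From mathcomp Require Import all_classical all_reals all_analysis.
Set Implicit Arguments. Unset Strict Implicit. Unset Printing Implicit Defensive.
Import Order.TTheory GRing.Theory Num.Theory numFieldNormedType.Exports.
Local Open Scope ring_scope.

(* Reciprocal Gamma function 1/Gamma (entire), via Gauss' product:     *)
(* valid for every real x (it vanishes at x = 0,-1,-2,...).            *)
Definition rgamma {R : realType} (x : R) : R :=
  limn (fun n : nat => (\prod_(i < n.+1) (x + i%:R)) / (n`!%:R * powR n%:R x)).

Inductive gen := gLp | gLm | gL | gB | gVp | gVm | gWp | gWm.

Definition gen_odd (g : gen) : bool :=
  match g with gVp | gVm | gWp | gWm => true | _ => false end.

(* Chiral modules.  Basis index (n, false) stands for  L_+^n Omega,    *)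
(* (n, true) for L_+^n V_+ Omega (left-chiral [J,-J]) resp.            *)
(* L_+^n W_+ Omega (right-chiral [J,J]).  A vector is given by its     *)
(* actions on the basis, derived from the defining relations:          *)
(*  left-chiral [J,-J], e_n = L_+^n Om, f_n = L_+^n V_+ Om:             *)
(*   L_+ e_n = e_{n+1},  L_+ f_n = f_{n+1}                              *)
(*   L e_n = (J+n) e_n,  L f_n = (J+1/2+n) f_n                          *)
(*   B e_n = -J e_n,     B f_n = (-J+1/2) f_n                           *)
(*   L_- e_n = -n(2J+n-1) e_{n-1},  L_- f_n = -n(2J+n) f_{n-1}          *)
(*   V_+ e_n = f_n,  V_+ f_n = 0;   W_+ e_n = 0,  W_+ f_n = e_{n+1}     *)
(*   V_- e_n = -n f_{n-1}, V_- f_n = 0; W_- e_n = 0, W_- f_n = -(2J+n)e_n*)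
(*  right-chiral [J,J]: the same with V <-> W exchanged and B -> -B.   *)
(* The action on a coefficient vector v gives the coefficient vector    *)
(* of the image.                                                        *)
Definition basis := (nat * bool)%type.
Definition vec (R : realType) := basis -> R.

Definition prevc {R : realType} (v : vec R) (n : nat) (s : bool) : R :=
  match n with 0 => 0 | n'.+1 => v (n', s) end.

(* Action of the odd generators, by role: X_+ is the odd raising generator
   producing the second basis family (V_+ for left-, W_+ for right-chiral),
   Y_+ the other raising one, X_-, Y_- the corresponding lowering ones. *)
Definition actXp {R : realType} (v : vec R) : vec R :=
  fun a => let: (n, s) := a in if s then v (n, false) else 0.
Definition actYp {R : realType} (v : vec R) : vec R :=
  fun a => let: (n, s) := a in if s then 0 else prevc v n true.
Definition actXm {R : realType} (v : vec R) : vec R :=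
  fun a => let: (n, s) := a in
  if s then - n.+1%:R * v (n.+1, false) else 0.
Definition actYm {R : realType} (J : R) (v : vec R) : vec R :=
  fun a => let: (n, s) := a in
  if s then 0 else - (2 * J + n%:R) * v (n, true).

(* left = true : left-chiral module [J,-J];  left = false : right-chiral [J,J] *)
Definition chiral_act {R : realType} (left : bool) (J : R) (g : gen) (v : vec R)
  : vec R :=
  match g with
  | gLp => fun a => let: (n, s) := a in prevc v n s
  | gL  => fun a => let: (n, s) := a in
           (if s then J + 2^-1 + n%:R else J + n%:R) * v (n, s)
  | gB  => fun a => let: (n, s) := a in
           let sB : R := if left then -1 else 1 in
           (if s then sB * J - sB / 2 else sB * J) * v (n, s)
  | gLm => fun a => let: (n, s) := a in
           (if s then - (n.+1%:R * (2 * J + n.+1%:R))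
                 else - (n.+1%:R * (2 * J + n%:R))) * v (n.+1, s)
  | gVp => if left then actXp v else actYp v
  | gWp => if left then actYp v else actXp v
  | gVm => if left then actXm v else actYm J v
  | gWm => if left then actYm J v else actXm v
  end.

Definition Omega {R : realType} : vec R := fun a => if a == (0%N, false) then 1 else 0.

Definition bparity (p : bool) (a : basis) : bool := p (+) a.2.

Definition tvec (R : realType) := basis -> basis -> R.

Definition tens {R : realType} (x y : vec R) : tvec R := fun a1 a2 => x a1 * y a2.

Definition tensor_act {R : realType} (left1 : bool) (J1 : R) (p1 : bool)
  (left2 : bool) (J2 : R) (g : gen) (t : tvec R) : tvec R :=
  fun a1 a2 =>
    chiral_act left1 J1 g (fun b1 => t b1 a2) a1
    + (-1) ^+ (gen_odd g && bparity p1 a1) * chiral_act left2 J2 g (t a1) a2.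

Definition actUp {R : realType} (left : bool) (J : R) (v : vec R) : vec R :=
  fun a => chiral_act left J gVp v a + chiral_act left J gWp v a.

From HB Require Import structures.
From mathcomp Require Import all_boot all_order all_algebra.
From mathcomp Require Import all_classical all_reals all_analysis.
From mathcomp Require Import ring lra zify.

(* In a chiral module generated by [Psi], let [X] be the odd raising generator
   not killing [Psi] and [Y] the other one, and write [basisv (m, s)] for
   [L_+^m X^s Psi].  As [Y Psi = 0] and [{X, Y} = L_+], [U_+ = X + Y] sends
   [basisv (m, false)] to [basisv (m, true)] and that to [basisv (m.+1, false)],
   so [U_+^k Psi = basisv (k/2, odd k)].  Using [1/G(1 + m) = 1/m!], both sides
   of the identity become the vector [hw_vec] whose coefficient on
   [basisv (m1, s) (x) basisv (m2, s)] is
   [(-1)^(m1 + s (1 - p)) n! / (m1! m2! G(2 j1 + m1 + s) G(2 j2 + m2 + s))]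
   if [m1 + m2 + s = n], and 0 otherwise.  A generator combines neighbouring
   coefficients of this vector, and once every reciprocal Gamma is shifted to a
   common argument with [1/G(x) = x/G(x + 1)], the highest-weight and eigenvalue
   equations are polynomial identities.  The functional equation and
   [1/G(1) = 1] are read off Gauss' product, which converges monotonically for
   [x >= 0], hence for every [x] by the functional equation. *)

Set Implicit Arguments.
Unset Strict Implicit.
Unset Printing Implicit Defensive.
Import Order.TTheory GRing.Theory Num.Theory numFieldNormedType.Exports.
Local Open Scope ring_scope.

Lemma natr_fact_neq0 (R : numDomainType) m : m`!%:R != 0 :> R.
Proof. by rewrite pnatr_eq0 -lt0n fact_gt0. Qed.

Section ReciprocalGamma.
Local Open Scope classical_set_scope.
Variable R : realType.

Definition gauss_seq (x : R) (n : nat) : R :=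
  (\prod_(i < n.+1) (x + i%:R)) / (n`!%:R * powR n%:R x).

Lemma ln1B_invS n : ln (1 - n.+1%:R^-1) = ln (n%:R : R) - ln n.+1%:R.
Proof.
case: n => [|n]; first by rewrite invr1 subrr ln0 // ln1 subrr.
have -> : 1 - n.+2%:R^-1 = n.+1%:R / n.+2%:R :> R by field.
by rewrite ln_div // posrE ltr0n.
Qed.

Lemma prod_rising_recl x n :
  \prod_(i < n.+2) (x + i%:R) = x * \prod_(i < n.+1) ((x + 1) + i%:R) :> R.
Proof.
rewrite big_ord_recl /= addr0; congr (_ * _); apply: eq_bigr => i _.
by rewrite /bump /= add1n -addn1 natrD [_ + 1]addrC addrA.
Qed.

Lemma expR_mul_ln a x : x != 0 -> expR (a * ln x) = x `^ a :> R.
Proof. by rewrite /powR => /negbTE ->. Qed.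

(* The last factor is [(n/(n+1))^x], written so that its limit is easy to take. *)
Lemma gauss_seqS x n : (0 < n)%N ->
  gauss_seq x n.+1 = gauss_seq x n * (1 + x * n.+1%:R^-1)
                     * expR (x * ln (1 - n.+1%:R^-1)).
Proof.
case: n => // n _; rewrite ln1B_invS mulrBr expRD expRN !expR_mul_ln ?pnatr_eq0 //.
rewrite /gauss_seq big_ord_recr /= factS natrM.
have hp1 : powR n.+1%:R x != 0 :> R by rewrite powR_eq0 pnatr_eq0.
have hp2 : powR n.+2%:R x != 0 :> R by rewrite powR_eq0 pnatr_eq0.
by field; rewrite natr_fact_neq0 hp1 hp2 -(natrD _ 2 n) pnatr_eq0.
Qed.

Lemma gauss_seqS_shift x n : (0 < n)%N ->
  gauss_seq x n.+1 = x * gauss_seq (x + 1) n * expR ((x + 1) * ln (1 - n.+1%:R^-1)).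
Proof.
case: n => // n _; rewrite ln1B_invS mulrBr expRD expRN !expR_mul_ln ?pnatr_eq0 //.
rewrite /gauss_seq prod_rising_recl factS natrM.
have hp1 : powR n.+1%:R x != 0 :> R by rewrite powR_eq0 pnatr_eq0.
have hp2 : powR n.+2%:R x != 0 :> R by rewrite powR_eq0 pnatr_eq0.
rewrite !powRD ?pnatr_eq0 ?implybT // !powRr1 ?ler0n //.
by field; rewrite natr_fact_neq0 hp1 hp2 -(natrD _ 2 n) -(natrD _ 1 n) !pnatr_eq0.
Qed.

Lemma cvg_expR_mul_ln1B_invS a :
  (fun n : nat => expR (a * ln (1 - n.+1%:R^-1 : R))) @ \oo --> (1 : R).
Proof.
have to1 : (fun n : nat => 1 - n.+1%:R^-1 : R) @ \oo --> (1 : R).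
  by rewrite -[X in _ --> X]subr0; exact: cvgB (cvg_cst _) (@cvg_harmonic R).
have to_ln1 : (fun n : nat => ln (1 - n.+1%:R^-1 : R)) @ \oo --> ln (1 : R).
  exact: (@continuous_cvg _ _ _ _ _ _ (@ln R) 1 (continuous_ln ltr01) to1).
have to0 : (fun n : nat => a * ln (1 - n.+1%:R^-1 : R)) @ \oo --> (0 : R).
  by rewrite -(mulr0 a) -(@ln1 R); exact: cvgMl_tmp.
rewrite -[X in _ --> X]expR0.
exact: (@continuous_cvg _ _ _ _ _ _ (@expR R) 0 (@continuous_expR R 0) to0).
Qed.

Lemma gauss_seq_ge0 x n : 0 <= x -> 0 <= gauss_seq x n.
Proof.
move=> x_ge0; rewrite divr_ge0 ?mulr_ge0 ?powR_ge0 //.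
by apply: prodr_ge0 => i _; rewrite addr_ge0.
Qed.

Lemma gauss_seq_nonincr x n : 0 <= x -> (0 < n)%N ->
  gauss_seq x n.+1 <= gauss_seq x n.
Proof.
move=> x_ge0 n_gt0; rewrite gauss_seqS // -mulrA ler_piMr ?gauss_seq_ge0 //.
set t : R := n.+1%:R^-1.
have t_lt1 : t < 1 by rewrite invf_lt1 ?ltr0n // ltr1n ltnS.
have ln_le : t + ln (1 - t) <= 0.
  by have := @le_ln1Dx R (- t); rewrite ltrN2 => /(_ t_lt1); lra.
(* the ratio [(1 + x t) (1 - t)^x] is at most [e^(x t) e^(-x t) = 1] *)
apply: (le_trans (ler_wpM2r (ltW (expR_gt0 _)) (expR_ge1Dx (x * t)))).
by rewrite -expRD -mulrDr -[X in _ <= X]expR0 ler_expR mulr_ge0_le0.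
Qed.

Lemma is_cvg_gauss_seq_ge0 x : 0 <= x -> cvgn (gauss_seq x).
Proof.
move=> x_ge0.
have /cvg_ex [l to_l] : cvgn (fun n => gauss_seq x n.+1).
  apply: nonincreasing_is_cvgn.
    by apply/nonincreasing_seqP => n; exact: gauss_seq_nonincr.
  by exists 0 => _ [n _ <-]; exact: gauss_seq_ge0.
by apply/cvg_ex; exists l; rewrite -cvg_shiftS.
Qed.

Lemma gauss_seq_cvg_rec x : cvgn (gauss_seq (x + 1)) ->
  gauss_seq x @ \oo --> x * limn (gauss_seq (x + 1)).
Proof.
move=> cvg_x1; rewrite -cvg_shiftS.
have eq_near : \forall n \near \oo,
    x * gauss_seq (x + 1) n * expR ((x + 1) * ln (1 - n.+1%:R^-1))
    = gauss_seq x n.+1.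
  by exists 1%N => // n /= n_gt0; rewrite gauss_seqS_shift.
have to_lim : (fun n => x * gauss_seq (x + 1) n * expR ((x + 1) * ln (1 - n.+1%:R^-1)))
    @ \oo --> x * limn (gauss_seq (x + 1)) * 1.
  by apply: cvgM; [exact: cvgMl_tmp | exact: cvg_expR_mul_ln1B_invS].
by rewrite mulr1 in to_lim; exact: cvg_trans (near_eq_cvg eq_near) to_lim.
Qed.

Lemma is_cvg_gauss_seq x : cvgn (gauss_seq x).
Proof.
suff cvg_ge : forall (m : nat) y, - m%:R <= y -> cvgn (gauss_seq y).
  apply: (cvg_ge (Num.Def.archi_bound x)).
  by rewrite lerNl ltW // unstable.ltrNbound.
elim=> [|m IH] y y_ge; first by apply: is_cvg_gauss_seq_ge0; rewrite -oppr0.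
apply: cvgP; apply: gauss_seq_cvg_rec; apply: IH.
by move: y_ge; rewrite -natr1 opprD lerBlDr.
Qed.

Lemma rgamma_rec (x : R) : rgamma x = x * rgamma (x + 1).
Proof.
rewrite /rgamma -/(gauss_seq x) -/(gauss_seq (x + 1)).
have := gauss_seq_cvg_rec (@is_cvg_gauss_seq (x + 1)).
exact: cvg_lim.
Qed.

Lemma rgamma1 : rgamma (1 : R) = 1.
Proof.
apply: cvg_lim; first exact: Rhausdorff.
rewrite -/(gauss_seq 1) -cvg_shiftS.
have -> : (fun n => gauss_seq 1 n.+1) = (fun n => 1 + n.+1%:R^-1).
  apply: funext => n; rewrite /gauss_seq powRr1 //.
  have -> : \prod_(i < n.+2) (1 + i%:R) = n.+2`!%:R :> R.
    rewrite fact_prod big_add1 big_mkord natr_prod.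
    by apply: eq_bigr => i _; rewrite nat1r.
  rewrite [n.+2`!]factS natrM.
  by field; rewrite natr_fact_neq0 -(natrD _ 1 n) pnatr_eq0.
have to1 : (fun n => 1 + n.+1%:R^-1) @ \oo --> (1 + 0 : R).
  exact: cvgD (cvg_cst _) (@cvg_harmonic R).
by rewrite addr0 in to1.
Qed.

Lemma rgamma_nat m : rgamma (1 + m%:R : R) = m`!%:R^-1.
Proof.
elim: m => [|m IH]; first by rewrite addr0 rgamma1 invr1.
have := rgamma_rec (1 + m%:R); rewrite IH -addrA natr1 nat1r => rec.
by rewrite factS natrM invfM rec mulKf.
Qed.

End ReciprocalGamma.

Lemma sum_ord_mul_eqn (R : nzSemiRingType) N (F : nat -> R) K :
  \sum_(k < N) F k * (k == K :> nat)%:R = (K < N)%:R * F K.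
Proof.
rewrite (eq_bigr (fun k : 'I_N => if k == K :> nat then F k else 0)); last first.
  by move=> k _; case: eqP; rewrite ?mulr1 ?mulr0.
by rewrite -big_mkcond big_ord1_eq; case: ltnP; rewrite ?mul1r ?mul0r.
Qed.

Section ChiralModuleBasis.
Variable R : realType.

Definition basisv (b : nat * bool) : vec R := fun a => if a == b then 1 else 0.

Lemma OmegaE : Omega = basisv (0%N, false). Proof. by []. Qed.

Lemma basisvE k s m s' : basisv (k, s) (m, s') = (s == s')%:R * (k == m)%:R.
Proof.
rewrite /basisv xpair_eqE -natrM mulnb (eq_sym m) (eq_sym s') andbC.
by case: (_ && _).
Qed.

Lemma basisv_half k m s : basisv (k./2, odd k) (m, s) = (k == s + m.*2)%N%:R.
Proof.
rewrite /basisv; have -> : ((m, s) == (k./2, odd k)) = (k == s + m.*2)%N.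
  apply/eqP/eqP => [[-> ->]|->]; first by rewrite odd_double_half.
  by rewrite half_bit_double oddD odd_double addbF oddb.
by case: eqP.
Qed.

Lemma iter_Lp_basisv l J k s :
  iter k (chiral_act l J gLp) (basisv (0%N, s)) = basisv (k, s).
Proof.
elim: k => [|k IH] //; rewrite iterS IH.
by apply: funext => -[[|n] s'].
Qed.

Lemma actXp_basisv m : actXp (basisv (m, false)) = basisv (m, true).
Proof.
by apply: funext => -[n [|]]; rewrite /actXp /basisv /= !xpair_eqE ?andbT ?andbF.
Qed.

Lemma actUp_basisv_false l J m : actUp l J (basisv (m, false)) = basisv (m, true).
Proof.
apply: funext => -[[|n] [|]]; rewrite /actUp; case: l => //=;
  by rewrite /actXp /actYp /prevc /basisv /= ?xpair_eqE ?andbT ?andbF ?addr0 ?add0r.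
Qed.

Lemma actUp_basisv_true l J m : actUp l J (basisv (m, true)) = basisv (m.+1, false).
Proof.
apply: funext => -[[|n] [|]]; rewrite /actUp; case: l => //=;
  by rewrite /actXp /actYp /prevc /basisv /= ?xpair_eqE ?andbT ?andbF ?eqSS ?addr0 ?add0r.
Qed.

Lemma iter_actUp_Omega l J k :
  iter k (actUp l J) Omega = basisv (k./2, odd k).
Proof.
elim: k => [|k IH] //; rewrite iterS IH.
have -> : k.+1./2 = (odd k + k./2)%N by rewrite -uphalf_half.
rewrite /=; case: (odd k).
  by rewrite actUp_basisv_true.
by rewrite actUp_basisv_false.
Qed.

End ChiralModuleBasis.

Section HighestWeightVector.
Variable R : realType.

Definition rgammaD (x : R) (m : nat) : R := rgamma (x + m%:R).

Lemma rgammaDS x m : rgammaD x m = (x + m%:R) * rgammaD x m.+1.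
Proof. by rewrite /rgammaD {1}rgamma_rec -addrA natr1. Qed.

Definition hw_vec (j1 j2 : R) (p : bool) (n : nat) : tvec R :=
  fun '(m1, s1) '(m2, s2) =>
    ((s1 == s2) && (m1 + m2 + s1 == n)%N)%:R *
    (n`!%:R * (-1) ^+ (m1 + (s1 && ~~ p)) * rgammaD 1 m1 * rgammaD 1 m2
     * rgammaD (2 * j1) (m1 + s1) * rgammaD (2 * j2) (m2 + s1)).

Definition coefU (j1 j2 : R) (p : bool) (n k : nat) : R :=
  (-1) ^+ ((k.+1 - p) %/ 2)
  * rgamma (1 + (k %/ 2)%:R) * rgamma (1 + ((2 * n - k) %/ 2)%:R)
  * rgamma (2 * j1 + (k.+1 %/ 2)%:R) * rgamma (2 * j2 + ((2 * n - k).+1 %/ 2)%:R).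

Lemma sum_actUp_hw_vec j1 j2 p n m1 s1 m2 s2 :
  n`!%:R * \sum_(k < (2 * n).+1) coefU j1 j2 p n k
      * (basisv R (k./2, odd k) (m1, s1)
         * basisv R ((2 * n - k)./2, odd (2 * n - k)) (m2, s2))
  = hw_vec j1 j2 p n (m1, s1) (m2, s2).
Proof.
under eq_bigr => k _ do rewrite !basisv_half mulrA mulrAC.
rewrite (@sum_ord_mul_eqn _ _
  (fun k => coefU j1 j2 p n k * (2 * n - k == s2 + m2.*2)%N%:R)).
rewrite [X in _ * X]mulrCA -natrM mulnb.
have -> : ((s1 + m1.*2 < (2 * n).+1) && (2 * n - (s1 + m1.*2) == s2 + m2.*2))%N
          = (s1 == s2) && (m1 + m2 + s1 == n)%N.
  by case: s1; case: s2 => /=; lia.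
rewrite /hw_vec; case: andP => [[_ /eqP <-]|_]; last by rewrite /= !(mul0r, mulr0).
rewrite /coefU /rgammaD.
have -> : (((s1 + m1.*2).+1 - p) %/ 2 = m1 + (s1 && ~~ p))%N.
  by case: s1; case: p => /=; lia.
have -> : ((s1 + m1.*2) %/ 2 = m1)%N by lia.
have -> : ((2 * (m1 + m2 + s1) - (s1 + m1.*2)) %/ 2 = m2)%N by lia.
have -> : ((s1 + m1.*2).+1 %/ 2 = m1 + s1)%N by case: s1 => /=; lia.
have -> : ((2 * (m1 + m2 + s1) - (s1 + m1.*2)).+1 %/ 2 = m2 + s1)%N.
  by case: s1 => /=; lia.
by rewrite mulr1 mul1r !mulrA.
Qed.

Lemma binomial_rgammaD m1 m2 :
  'C(m1 + m2, m1)%:R = (m1 + m2)`!%:R * rgammaD 1 m1 * rgammaD 1 m2 :> R.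
Proof.
rewrite /rgammaD !rgamma_nat -(bin_fact (leq_addr m2 m1)) addKn !natrM.
by field; rewrite !natr_fact_neq0.
Qed.

Definition coefL (j1 j2 : R) (n n1 : nat) : R :=
  'C(n, n1)%:R * (-1) ^+ n1 * rgamma (2 * j1 + n1%:R) * rgamma (2 * j2 + (n - n1)%:R).

Definition coefLXY (j1 j2 : R) (n m1 : nat) : R :=
  'C(n.-1, m1)%:R * (-1) ^+ m1 * rgamma (2 * j1 + 1 + m1%:R)
  * rgamma (2 * j2 + 1 + (n.-1 - m1)%:R).

Lemma sum_basisv_pair N (c : nat -> R) (f : nat -> nat) s m1 s1 m2 s2 :
  \sum_(k < N) c k * (basisv R (k : nat, s) (m1, s1) * basisv R (f k, s) (m2, s2))
  = [&& s == s1, s == s2, m1 < N & f m1 == m2]%N%:R * c m1.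
Proof.
rewrite (eq_bigr (fun k : 'I_N => c k * (s == s1)%:R * (s == s2)%:R
    * (f k == m2)%:R * (k == m1 :> nat)%:R)); last by move=> k _; rewrite !basisvE; ring.
rewrite (@sum_ord_mul_eqn _ _
  (fun k => c k * (s == s1)%:R * (s == s2)%:R * (f k == m2)%:R)).
by case: (s == s1) (s == s2) (m1 < N)%N (f m1 == m2) => [] [] [] [];
  rewrite /= ?(mulr0, mul0r, mulr1, mul1r).
Qed.

Lemma sum_Lp_hw_vec j1 j2 (p : bool) n m1 s1 m2 s2 :
  \sum_(n1 < n.+1) coefL j1 j2 n n1
      * (basisv R (n1 : nat, false) (m1, s1) * basisv R (n - n1, false)%N (m2, s2))
  - (-1) ^+ p * n%:R * \sum_(k < n) coefLXY j1 j2 n k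
      * (basisv R (k : nat, true) (m1, s1) * basisv R (n.-1 - k, true)%N (m2, s2))
  = hw_vec j1 j2 p n (m1, s1) (m2, s2).
Proof.
rewrite !sum_basisv_pair.
case: s1; case: s2;
  rewrite /hw_vec /= ?(mul0r, mulr0, sub0r, subr0, oppr0, addn0, addn1) //.
  have -> : ((m1 < n) && (n.-1 - m1 == m2))%N = ((m1 + m2).+1 == n)%N by lia.
  case: eqP => [<-|_]; last by rewrite !mul0r mulr0 oppr0.
  rewrite /coefLXY /= addKn binomial_rgammaD factS natrM /rgammaD -!addrA !nat1r exprD.
  by case: p => /=; rewrite ?expr0 ?expr1; ring.
have -> : ((m1 < n.+1) && (n - m1 == m2))%N = (m1 + m2 == n)%N by lia.
case: eqP => [<-|_]; last by rewrite !mul0r.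
by rewrite /coefL addKn binomial_rgammaD /rgammaD; ring.
Qed.

End HighestWeightVector.

Ltac generalize_atoms := repeat match goal with
 | |- context [@rgammaD ?R ?x ?m] => generalize (@rgammaD R x m); intro
 | |- context [GRing.exp ?b ?m] => is_var m; generalize (GRing.exp b m); intro
 | |- context [GRing.natmul (GRing.one ?R) ?m] =>
     is_var m; generalize (GRing.natmul (GRing.one R) m); intro
 end.

(* Reciprocal Gammas are shifted to their largest argument and casts expressed
   through [m1], [m2] and [m1 + m2], so that the atoms left are independent. *)
Ltac hw_components R j1 j2 p upper :=
  let m1 := fresh "m1" in let m2 := fresh "m2" in
  apply: funext => -[m1 []]; apply: funext => -[m2 []];
  rewrite /tensor_act /=; case: upper; case: p;
  rewrite /hw_vec /actXm /actYm /bparity /=;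
  rewrite ?mulr0 ?addr0 ?mul0r ?expr0 ?mul1r ?addn0 ?addn1 ?addSn ?addnS;
  try (case: eqP => [<-|_]); rewrite ?mulr1n ?mulr0n;
  rewrite ?(@rgammaDS R 1 m1) ?(@rgammaDS R 1 m1.+1) ?(@rgammaDS R 1 m2)
    ?(@rgammaDS R 1 m2.+1) ?(@rgammaDS R (2 * j1) m1) ?(@rgammaDS R (2 * j1) m1.+1)
    ?(@rgammaDS R (2 * j2) m2) ?(@rgammaDS R (2 * j2) m2.+1);
  rewrite ?exprS ?expr1 ?expr0
    -?(natr1 (R:=R) m1.+1) -?(natr1 (R:=R) m1) -?(natr1 (R:=R) m2.+1)
    -?(natr1 (R:=R) m2) -?(natr1 (R:=R) (m1 + m2)%N) ?(natrD R m1 m2);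
  generalize_atoms.

Section HighestWeight.
Variables (R : realType) (j1 j2 : R) (p upper : bool) (n : nat).

Let T := tensor_act upper j1 p (~~ upper) j2.
Let w := hw_vec j1 j2 p n.

Lemma hw_vec_Lm : T gLm w = fun _ _ => 0.
Proof. by rewrite /T /w; hw_components R j1 j2 p upper; ring. Qed.

Lemma hw_vec_Vm : T gVm w = fun _ _ => 0.
Proof. by rewrite /T /w; hw_components R j1 j2 p upper; ring. Qed.

Lemma hw_vec_Wm : T gWm w = fun _ _ => 0.
Proof. by rewrite /T /w; hw_components R j1 j2 p upper; ring. Qed.

Lemma hw_vec_L : T gL w = fun a1 a2 => (j1 + j2 + n%:R) * w a1 a2.
Proof. by rewrite /T /w; hw_components R j1 j2 p upper; field. Qed.

Lemma hw_vec_B :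
  T gB w = fun a1 a2 => (if upper then - (j1 - j2) else j1 - j2) * w a1 a2.
Proof. by rewrite /T /w; hw_components R j1 j2 p upper; field. Qed.

End HighestWeight.

(* upper = true : Psi1 generates the left-chiral [j1,-j1], Psi2 the right-chiral
   [j2,j2], (X,Y) = (V_+,W_+);  upper = false : the reverse, (X,Y) = (W_+,V_+).
   p is the parity of Psi1. *)
Theorem mainTheorem2 (R : realType) (j1 j2 : R) (p upper : bool) (n : nat) :
  let act1 := chiral_act upper j1 in
  let act2 := chiral_act (~~ upper) j2 in
  let T := tensor_act upper j1 p (~~ upper) j2 in
  let Psi1 : vec R := Omega in
  let Psi2 : vec R := Omega in
  let X := if upper then gVp else gWp in
  let Y := if upper then gWp else gVp in
  let w : tvec R := fun a1 a2 =>
    n`!%:R * \sum_(k < (2 * n).+1)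
      ((-1) ^+ ((k.+1 - p) %/ 2)
       * rgamma (1 + (k %/ 2)%:R) * rgamma (1 + (((2 * n) - k) %/ 2)%:R)
       * rgamma (2 * j1 + ((k.+1) %/ 2)%:R)
       * rgamma (2 * j2 + (((2 * n) - k).+1 %/ 2)%:R))
      * tens (iter k (actUp upper j1) Psi1)
             (iter ((2 * n) - k) (actUp (~~ upper) j2) Psi2) a1 a2 in
  (w = fun a1 a2 =>
     \sum_(n1 < n.+1)
        'C(n, n1)%:R * (-1) ^+ n1 * rgamma (2 * j1 + n1%:R)
        * rgamma (2 * j2 + (n - n1)%:R)
        * tens (iter n1 (act1 gLp) Psi1) (iter (n - n1) (act2 gLp) Psi2) a1 a2
     - (-1) ^+ p * n%:R *
       \sum_(m1 < n)
        'C(n.-1, m1)%:R * (-1) ^+ m1 * rgamma (2 * j1 + 1 + m1%:R)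
        * rgamma (2 * j2 + 1 + (n.-1 - m1)%:R)
        * tens (iter m1 (act1 gLp) (act1 X Psi1))
               (iter (n.-1 - m1) (act2 gLp) (act2 Y Psi2)) a1 a2)
  /\ T gLm w = (fun _ _ => 0)
  /\ T gVm w = (fun _ _ => 0)
  /\ T gWm w = (fun _ _ => 0)
  /\ T gL w = (fun a1 a2 => (j1 + j2 + n%:R) * w a1 a2)
  /\ T gB w = (fun a1 a2 => (if upper then - (j1 - j2) else j1 - j2) * w a1 a2).
Proof.
have [XPsi1 YPsi2] :
    chiral_act upper j1 (if upper then gVp else gWp) Omega = basisv R (0%N, true)
    /\ chiral_act (~~ upper) j2 (if upper then gWp else gVp) Omega
       = basisv R (0%N, true).
  by case: upper; split; exact: actXp_basisv.
move=> act1 act2 T Psi1 Psi2 X Y w.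
have w_hw : w = hw_vec j1 j2 p n.
  apply: funext => -[m1 s1]; apply: funext => -[m2 s2].
  rewrite -sum_actUp_hw_vec /w /tens /Psi1 /Psi2.
  by under eq_bigr => k _ do rewrite !iter_actUp_Omega.
split.
  rewrite w_hw; apply: funext => -[m1 s1]; apply: funext => -[m2 s2].
  rewrite -sum_Lp_hw_vec /act1 /act2 /X /Y /Psi1 /Psi2 XPsi1 YPsi2 OmegaE.
  by congr (_ - _ * _); apply: eq_bigr => k _; rewrite /tens !iter_Lp_basisv.
rewrite w_hw /T; split; first exact: hw_vec_Lm.
split; first exact: hw_vec_Vm.
split; first exact: hw_vec_Wm.
split; first exact: hw_vec_L.
exact: hw_vec_B.
Qed.
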